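(* Let $D$ be a closed $\forall^+$ type of system $\mathcal F$ not containing the type constant $O$. Then $D$ is a syntactical data type, i.e. $D$ is both an input type and an output type.
   Context: $\lambda$-terms are those of the untyped $\lambda$-calculus; $Fv(t)$ denotes the free variables of $t$; a term is normal if it contains no $\beta$-redex. Types of system $\mathcal F$ are built from type variables and type constants (atomic, not quantifiable; $O$ is such a constant) with $\rightarrow$ and $\forall$; only proper types are considered (in every $\forall X A$, $X$ occurs free in $A$). Typing $\Gamma\vdash_{\mathcal F} t:A$ is given by: (ax) $\Gamma \vdash x_i : A_i$ for $x_i:A_i\in\Gamma$; ($\rightarrow_i$) from $\Gamma, x:B \vdash t : C$ infer $\Gamma \vdash \lambda x t : B \rightarrow C$; ($\rightarrow_e$) from $\Gamma \vdash u : B\rightarrow C$ and $\Gamma \vdash v : B$ infer $\Gamma \vdash (u)v : C$; ($\forall_i$) from $\Gamma \vdash t : A$, $X$ not free in $\Gamma$, infer $\Gamma \vdash t : \forall X A$; ($\forall_e$) from $\Gamma \vdash t : \forall X A$ infer $\Gamma \vdash t : A[C/X]$ for any type $C$. $\mathcal F_0$ is $\mathcal F$ without ($\forall_e$). Input type: a closed type $E$ such that for every normal $t$, $\vdash_{\mathcal F} t:E$ implies $\vdash_{\mathcal F_0} t:E$. Output type: a closed type $S$ not containing $O$ such that for every normal $t$ and variable $\alpha$, $\alpha:O\vdash_{\mathcal F} t:S$ implies $\alpha\notin Fv(t)$. The classes $\forall^+$, $\forall^-$: every type variable is both; if $A$ is $\forall^+$ (resp. $\forall^-$) and $B$ is $\forall^-$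 (resp. $\forall^+$) then $B\rightarrow A$ is $\forall^+$ (resp. $\forall^-$); if $A$ is $\forall^+$ and $X$ is free in $A$ then $\forall XA$ is $\forall^+$. *)

(* System F with type constants, Curry-style typing of
   untyped (named) lambda-terms. Types use de Bruijn indices for type
   variables; term variables are named by nat. *)
From Stdlib Require Import Arith List.
Import ListNotations.

Inductive term : Type :=
| Var : nat -> term
| Lam : nat -> term -> term
| App : term -> term -> term.

Fixpoint free_in (x : nat) (t : term) : Prop :=
  match t with
  | Var y => x = y
  | Lam y u => x <> y /\ free_in x u
  | App u v => free_in x u \/ free_in x v
  end.

Fixpoint normal (t : term) : Prop :=
  match t with
  | Var _ => True
  | Lam _ u => normal u
  | App (Lam _ _) _ => False
  | App u v => normal u /\ normal v
  end.

Inductive ty : Type :=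
| TVar : nat -> ty
| TConst : nat -> ty
| TArr : ty -> ty -> ty
| TAll : ty -> ty.

Definition O_const : ty := TConst 0.

Fixpoint occurs (k : nat) (A : ty) : Prop :=
  match A with
  | TVar n => n = k
  | TConst _ => False
  | TArr B C => occurs k B \/ occurs k C
  | TAll B => occurs (S k) B
  end.

Fixpoint proper (A : ty) : Prop :=
  match A with
  | TVar _ | TConst _ => True
  | TArr B C => proper B /\ proper C
  | TAll B => occurs 0 B /\ proper B
  end.

Fixpoint closed_at (k : nat) (A : ty) : Prop :=
  match A with
  | TVar n => n < k
  | TConst _ => True
  | TArr B C => closed_at k B /\ closed_at k C
  | TAll B => closed_at (S k) B
  end.

Definition closed_ty (A : ty) : Prop := closed_at 0 A.

Fixpoint contains_const (c : nat) (A : ty) : Prop :=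
  match A with
  | TVar _ => False
  | TConst c' => c = c'
  | TArr B C => contains_const c B \/ contains_const c C
  | TAll B => contains_const c B
  end.

Definition contains_O (A : ty) : Prop := contains_const 0 A.

Fixpoint tlift (d c : nat) (A : ty) : ty :=
  match A with
  | TVar n => if n <? c then TVar n else TVar (n + d)
  | TConst k => TConst k
  | TArr B C => TArr (tlift d c B) (tlift d c C)
  | TAll B => TAll (tlift d (S c) B)
  end.

(** capture-avoiding substitution of C for the variable of index k in A
    (variables above k are decremented: this is the body of a removed
    binder). *)
Fixpoint tsubst (k : nat) (C : ty) (A : ty) : ty :=
  match A with
  | TVar n =>
      if n <? k then TVar n
      else if n =? k then tlift k 0 C
      else TVar (n - 1)
  | TConst c => TConst c
  | TArr B D => TArr (tsubst k C B) (tsubst k C D)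
  | TAll B => TAll (tsubst (S k) C B)
  end.

(** A[C/X] where X is the variable bound by forall X A *)
Definition inst (A C : ty) : ty := tsubst 0 C A.

(** contexts: x1:A1, ..., the most recent declaration first *)
Definition context := list (nat * ty).

Fixpoint lookup (G : context) (x : nat) : option ty :=
  match G with
  | [] => None
  | (y, A) :: G' => if x =? y then Some A else lookup G' x
  end.

(** shifting the context when going under a type binder: this renders the
    side condition "X not free in Gamma" of the forall-introduction rule *)
Definition shift_ctx (G : context) : context :=
  map (fun p => (fst p, tlift 1 0 (snd p))) G.

(** Typing; [elim = true] gives system F, [elim = false] gives F_0
    (no forall-elimination rule). Only proper types are used. *)
Inductive typing (elim : bool) : context -> term -> ty -> Prop :=
| T_ax : forall G x A, lookup G x = Some A -> typing elim G (Var x) A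
| T_arr_i : forall G x t B C,
    proper B -> typing elim ((x, B) :: G) t C ->
    typing elim G (Lam x t) (TArr B C)
| T_arr_e : forall G u v B C,
    typing elim G u (TArr B C) -> typing elim G v B ->
    typing elim G (App u v) C
| T_all_i : forall G t A,
    occurs 0 A -> typing elim (shift_ctx G) t A ->
    typing elim G t (TAll A)
| T_all_e : forall G t A C,
    elim = true -> proper C -> typing elim G t (TAll A) ->
    typing elim G t (inst A C).

Definition typF := typing true.
Definition typF0 := typing false.

Definition input_type (E : ty) : Prop :=
  closed_ty E /\ proper E /\
  forall t, normal t -> typF [] t E -> typF0 [] t E.

Definition output_type (S : ty) : Prop :=
  closed_ty S /\ proper S /\ ~ contains_O S /\
  forall t alpha, normal t -> typF [(alpha, O_const)] t S -> ~ free_in alpha t.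

Inductive forall_pos : ty -> Prop :=
| FP_var : forall n, forall_pos (TVar n)
| FP_arr : forall B A, forall_neg B -> forall_pos A -> forall_pos (TArr B A)
| FP_all : forall A, forall_pos A -> occurs 0 A -> forall_pos (TAll A)
with forall_neg : ty -> Prop :=
| FN_var : forall n, forall_neg (TVar n)
| FN_arr : forall B A, forall_pos B -> forall_neg A -> forall_neg (TArr B A).

Definition syntactical_data_type (D : ty) : Prop :=
  input_type D /\ output_type D.

(* A normal term whose type is forall^+, in a context declaring only forall^-
   or atomic types, is a string of lambda- and forall-introductions ending in
   a head variable applied to arguments.  Since forall^- types carry no
   quantifier along their arrow spine, the type of the head is used without
   forall-elimination, the result type and the argument types are read off
   that spine, and the argument types are again forall^+.  Induction on the
   term then rebuilds the derivation in F_0 (input type), and shows that a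
   variable of atomic type O is never a head, its type not being forall^+,
   hence never free (output type). *)

From Stdlib Require Import Arith List Lia.
Import ListNotations.

(** * Parallel renaming and substitution of type variables *)

Definition up_ren (xi : nat -> nat) (n : nat) : nat :=
  match n with 0 => 0 | S m => S (xi m) end.

Fixpoint tren (xi : nat -> nat) (A : ty) : ty :=
  match A with
  | TVar n => TVar (xi n)
  | TConst c => TConst c
  | TArr B C => TArr (tren xi B) (tren xi C)
  | TAll B => TAll (tren (up_ren xi) B)
  end.

Definition up_sub (s : nat -> ty) (n : nat) : ty :=
  match n with 0 => TVar 0 | S m => tren S (s m) end.

Fixpoint tsub (s : nat -> ty) (A : ty) : ty :=
  match A with
  | TVar n => s n
  | TConst c => TConst c
  | TArr B C => TArr (tsub s B) (tsub s C)
  | TAll B => TAll (tsub (up_sub s) B)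
  end.

Definition scons (D : ty) (s : nat -> ty) (n : nat) : ty :=
  match n with 0 => D | S m => s m end.

Lemma tren_ext A xi zeta : (forall n, xi n = zeta n) -> tren xi A = tren zeta A.
Proof.
  revert xi zeta; induction A; intros xi zeta H; simpl; f_equal; auto.
  apply IHA; intros [|n]; simpl; auto.
Qed.

Lemma tsub_ext A s t : (forall n, s n = t n) -> tsub s A = tsub t A.
Proof.
  revert s t; induction A; intros s t H; simpl; f_equal; auto.
  apply IHA; intros [|n]; simpl; [reflexivity | now rewrite H].
Qed.

Lemma tren_tren A xi zeta : tren xi (tren zeta A) = tren (fun n => xi (zeta n)) A.
Proof.
  revert xi zeta; induction A; intros; simpl; f_equal; auto.
  rewrite IHA; apply tren_ext; intros [|n]; reflexivity.
Qed.

Lemma tsub_tren A s xi : tsub s (tren xi A) = tsub (fun n => s (xi n)) A.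
Proof.
  revert s xi; induction A; intros; simpl; f_equal; auto.
  rewrite IHA; apply tsub_ext; intros [|n]; reflexivity.
Qed.

Lemma tren_tsub A s xi : tren xi (tsub s A) = tsub (fun n => tren xi (s n)) A.
Proof.
  revert s xi; induction A; intros; simpl; f_equal; auto.
  rewrite IHA; apply tsub_ext; intros [|n]; simpl; [reflexivity|].
  rewrite !tren_tren; apply tren_ext; reflexivity.
Qed.

Lemma tsub_tsub A s t : tsub s (tsub t A) = tsub (fun n => tsub s (t n)) A.
Proof.
  revert s t; induction A; intros; simpl; f_equal; auto.
  rewrite IHA; apply tsub_ext; intros [|n]; simpl; [reflexivity|].
  rewrite tsub_tren, tren_tsub; apply tsub_ext; reflexivity.
Qed.

Lemma tsub_var_id A s : (forall n, s n = TVar n) -> tsub s A = A.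
Proof.
  revert s; induction A; intros s H; simpl; f_equal; auto.
  apply IHA; intros [|n]; simpl; [reflexivity | now rewrite H].
Qed.

Lemma tsub_ren A xi : tsub (fun n => TVar (xi n)) A = tren xi A.
Proof.
  revert xi; induction A; intros; simpl; f_equal; auto.
  rewrite <- IHA; apply tsub_ext; intros [|n]; reflexivity.
Qed.

Lemma tsub_up_sub_tren T s : tsub (up_sub s) (tren S T) = tren S (tsub s T).
Proof. rewrite tsub_tren, tren_tsub; apply tsub_ext; reflexivity. Qed.

Lemma tsub_scons_tren T D s : tsub (scons D s) (tren S T) = tsub s T.
Proof. rewrite tsub_tren; apply tsub_ext; reflexivity. Qed.

Lemma tlift_as_tren A d c :
  tlift d c A = tren (fun n => if n <? c then n else n + d) A.
Proof.
  revert c; induction A; intros; simpl; f_equal; auto.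
  - now destruct (n <? c).
  - rewrite IHA; apply tren_ext; intros [|n]; [reflexivity|].
    change (S n <? S c) with (n <? c); simpl.
    now destruct (n <? c).
Qed.

Lemma tlift_shift A : tlift 1 0 A = tren S A.
Proof.
  rewrite tlift_as_tren; apply tren_ext; intros n.
  destruct (Nat.ltb_spec n 0); lia.
Qed.

Lemma tlift_0 A : tlift 0 0 A = A.
Proof.
  rewrite tlift_as_tren, <- tsub_ren; apply tsub_var_id; intros n.
  destruct (Nat.ltb_spec n 0); f_equal; lia.
Qed.

Definition tsubst_sub (k : nat) (C : ty) (n : nat) : ty :=
  if n <? k then TVar n else if n =? k then tlift k 0 C else TVar (n - 1).

Lemma tsubst_as_tsub A k C : tsubst k C A = tsub (tsubst_sub k C) A.
Proof.
  revert k; induction A; intros; simpl; f_equal; auto.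
  rewrite IHA; apply tsub_ext; intros [|n]; [reflexivity|].
  unfold tsubst_sub; simpl up_sub.
  change (S n <? S k) with (n <? k); change (S n =? S k) with (n =? k).
  destruct (Nat.ltb_spec n k); [reflexivity|].
  destruct (Nat.eqb_spec n k).
  - rewrite !tlift_as_tren, tren_tren; apply tren_ext; intros m.
    destruct (Nat.ltb_spec m 0); lia.
  - simpl; f_equal; lia.
Qed.

Lemma inst_as_tsub A C : inst A C = tsub (scons C TVar) A.
Proof.
  unfold inst; rewrite tsubst_as_tsub; apply tsub_ext.
  intros [|n]; unfold tsubst_sub; simpl.
  - apply tlift_0.
  - f_equal; lia.
Qed.

Lemma inst_up_sub A s D : inst (tsub (up_sub s) A) D = tsub (scons D s) A.
Proof.
  rewrite inst_as_tsub, tsub_tsub; apply tsub_ext; intros [|n]; simpl; [reflexivity|].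
  rewrite tsub_tren; apply tsub_var_id; reflexivity.
Qed.

Lemma tsub_inst A C s : tsub s (inst A C) = inst (tsub (up_sub s) A) (tsub s C).
Proof.
  rewrite inst_up_sub, inst_as_tsub, tsub_tsub; apply tsub_ext; intros [|n]; reflexivity.
Qed.

Lemma occurs_tren A xi k : occurs k A -> occurs (xi k) (tren xi A).
Proof.
  revert xi k; induction A; intros xi k H; simpl in *.
  - now subst.
  - exact H.
  - destruct H; [left|right]; auto.
  - exact (IHA (up_ren xi) (S k) H).
Qed.

Lemma not_occurs_tren A xi k : (forall m, xi m <> k) -> ~ occurs k (tren xi A).
Proof.
  revert xi k; induction A; intros xi k H; simpl.
  - intros E; now apply (H n).
  - auto.
  - intros [E|E]; [eapply IHA1|eapply IHA2]; eauto.
  - apply IHA; intros [|m]; simpl; [discriminate|].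
    intros E; injection E; apply H.
Qed.

Lemma occurs_tsub A s k m : occurs k A -> occurs m (s k) -> occurs m (tsub s A).
Proof.
  revert s k m; induction A; intros s k m H1 H2; simpl in *.
  - now subst.
  - exact H1.
  - destruct H1; [left|right]; eauto.
  - apply (IHA (up_sub s) (S k) (S m) H1); exact (occurs_tren _ S m H2).
Qed.

Lemma proper_tren A xi : proper A -> proper (tren xi A).
Proof.
  revert xi; induction A; intros xi H; simpl in *; auto.
  - destruct H; split; auto.
  - destruct H as [H1 H2]; split; [exact (occurs_tren _ (up_ren xi) 0 H1) | auto].
Qed.

Lemma proper_tsub A s : (forall n, proper (s n)) -> proper A -> proper (tsub s A).
Proof.
  revert s; induction A; intros s Hs H; simpl in *; auto.
  - destruct H; split; auto.
  - destruct H as [H1 H2]; split.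
    + exact (occurs_tsub _ (up_sub s) 0 0 H1 eq_refl).
    + apply IHA; auto; intros [|n]; simpl; auto using proper_tren.
Qed.

Lemma forall_pos_neg_tren A xi :
  (forall_pos A -> forall_pos (tren xi A)) /\ (forall_neg A -> forall_neg (tren xi A)).
Proof.
  revert xi; induction A; intros xi; split; intros H; simpl; inversion H; subst.
  - constructor.
  - constructor.
  - destruct (IHA1 xi), (IHA2 xi); constructor; auto.
  - destruct (IHA1 xi), (IHA2 xi); constructor; auto.
  - constructor; [apply IHA; auto | exact (occurs_tren _ (up_ren xi) 0 H2)].
Qed.

(** * Typing is stable under substitution of type variables *)

Definition ctx_sub (s : nat -> ty) (G : context) : context :=
  map (fun p => (fst p, tsub s (snd p))) G.

Lemma lookup_ctx_sub s G x : lookup (ctx_sub s G) x = option_map (tsub s) (lookup G x).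
Proof.
  induction G as [|[y T] G IH]; simpl; auto.
  destruct (x =? y); auto.
Qed.

Lemma lookup_shift_ctx G x : lookup (shift_ctx G) x = option_map (tlift 1 0) (lookup G x).
Proof.
  induction G as [|[y T] G IH]; simpl; auto.
  destruct (x =? y); auto.
Qed.

Lemma ctx_sub_shift s G : ctx_sub (up_sub s) (shift_ctx G) = shift_ctx (ctx_sub s G).
Proof.
  induction G as [|[y T] G IH]; simpl; auto.
  f_equal; [|exact IH]. now rewrite !tlift_shift, tsub_up_sub_tren.
Qed.

Lemma ctx_sub_scons_shift D s G : ctx_sub (scons D s) (shift_ctx G) = ctx_sub s G.
Proof.
  induction G as [|[y T] G IH]; simpl; auto.
  f_equal; [|exact IH]. now rewrite tlift_shift, tsub_scons_tren.
Qed.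

Lemma ctx_sub_id G : ctx_sub TVar G = G.
Proof.
  induction G as [|[y T] G IH]; simpl; auto.
  now rewrite tsub_var_id, IH.
Qed.

Lemma ctx_sub_succ G : ctx_sub (fun n => TVar (S n)) G = shift_ctx G.
Proof.
  induction G as [|[y T] G IH]; simpl; auto.
  now rewrite tsub_ren, tlift_shift, IH.
Qed.

Lemma typing_tsub e G t A s :
  typing e G t A -> (forall n, proper (s n)) -> typing e (ctx_sub s G) t (tsub s A).
Proof.
  intros H; revert s; induction H; intros s Hs.
  - constructor; now rewrite lookup_ctx_sub, H.
  - constructor; [apply proper_tsub | apply IHtyping]; auto.
  - econstructor; [apply IHtyping1 | apply IHtyping2]; auto.
  - constructor.
    + exact (occurs_tsub _ (up_sub s) 0 0 H eq_refl).
    + rewrite <- ctx_sub_shift; apply IHtyping.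
      intros [|n]; simpl; auto using proper_tren.
  - rewrite tsub_inst; apply T_all_e; auto using proper_tsub.
Qed.

(* Rename every type variable up by one, then eliminate the quantifier at the
   fresh variable 0. *)
Lemma typing_all_inv G t A : typF G t (TAll A) -> typF (shift_ctx G) t A.
Proof.
  intros H.
  pose proof (typing_tsub _ _ _ _ (fun n => TVar (S n)) H (fun n => I)) as H1.
  rewrite ctx_sub_succ in H1.
  pose proof (T_all_e true _ t _ (TVar 0) eq_refl I H1) as H2.
  rewrite inst_up_sub, tsub_var_id in H2; [exact H2|].
  intros [|n]; reflexivity.
Qed.

Fixpoint arrow_under_alls (A : ty) : Prop :=
  match A with TArr _ _ => True | TAll B => arrow_under_alls B | _ => False end.

Lemma arrow_under_alls_tsub A s : arrow_under_alls A -> arrow_under_alls (tsub s A).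
Proof. revert s; induction A; intros; simpl in *; auto; contradiction. Qed.

Lemma typing_lam_arrow_under_alls e G x u A :
  typing e G (Lam x u) A -> arrow_under_alls A.
Proof.
  remember (Lam x u) as t eqn:Et; induction 1; try discriminate; simpl; auto.
  rewrite inst_as_tsub; apply arrow_under_alls_tsub; auto.
Qed.

Inductive arrow_instance : ty -> ty -> ty -> Prop :=
| arrow_instance_arr B C : arrow_instance (TArr B C) B C
| arrow_instance_all A D B C :
    proper D -> arrow_instance (inst A D) B C -> arrow_instance (TAll A) B C.

Lemma typing_lam_inv_gen e G x u A :
  typing e G (Lam x u) A ->
  forall s, (forall n, proper (s n)) ->
  forall B C, arrow_instance (tsub s A) B C -> typing e ((x, B) :: ctx_sub s G) u C.
Proof.
  remember (Lam x u) as t eqn:Et; intros H; revert x u Et.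
  induction H; intros x0 u0 Et s Hs B' C' HAI; try discriminate; simpl in HAI.
  - injection Et as <- <-; inversion HAI; subst.
    exact (typing_tsub _ _ _ _ s H0 Hs).
  - inversion HAI as [|A0 D B0 C0 HD HI]; subst.
    rewrite inst_up_sub in HI.
    rewrite <- (ctx_sub_scons_shift D s G).
    apply (IHtyping x0 u0 eq_refl); auto.
    intros [|n]; simpl; auto.
  - rewrite tsub_inst in HAI.
    apply (IHtyping x0 u0 Et s Hs).
    apply (arrow_instance_all _ (tsub s C)); auto using proper_tsub.
Qed.

Lemma typing_lam_inv e G x u B C :
  typing e G (Lam x u) (TArr B C) -> typing e ((x, B) :: G) u C.
Proof.
  intros H; rewrite <- (ctx_sub_id G).
  apply (typing_lam_inv_gen _ _ _ _ _ H TVar (fun n => I)).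
  rewrite tsub_var_id by reflexivity; constructor.
Qed.

(** * Applicative spines *)

Fixpoint head_var (t : term) : option nat :=
  match t with Var x => Some x | App u _ => head_var u | Lam _ _ => None end.

Fixpoint term_size (t : term) : nat :=
  match t with
  | Var _ => 1
  | Lam _ u => S (term_size u)
  | App u v => S (term_size u + term_size v)
  end.

Lemma normal_app u v : normal (App u v) -> normal u /\ normal v.
Proof. destruct u; simpl; tauto. Qed.

Lemma normal_lam_or_neutral t :
  normal t -> (exists x u, t = Lam x u) \/ exists x, head_var t = Some x.
Proof.
  induction t as [x|x u _|u IHu v _]; intros Hn.
  - right; now exists x.
  - left; now exists x, u.
  - destruct (IHu (proj1 (normal_app _ _ Hn))) as [[y [w ->]]|[x Hx]].
    + contradiction.
    + right; now exists x.
Qed.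

Fixpoint spine_no_all (A : ty) : Prop :=
  match A with TArr _ C => spine_no_all C | TAll _ => False | _ => True end.

Lemma spine_no_all_tren A xi : spine_no_all A -> spine_no_all (tren xi A).
Proof. revert xi; induction A; intros; simpl in *; auto. Qed.

Lemma forall_neg_spine_no_all A : forall_neg A -> spine_no_all A.
Proof. induction A; intros H; inversion H; subst; simpl; auto. Qed.

Inductive app_spine (P : term -> ty -> Prop) (x : nat) (T : ty) : term -> ty -> Prop :=
| app_spine_var : app_spine P x T (Var x) T
| app_spine_app u v B C :
    app_spine P x T u (TArr B C) -> P v B -> app_spine P x T (App u v) C.

Lemma app_spine_spine_no_all P x T t A :
  app_spine P x T t A -> spine_no_all T -> spine_no_all A.
Proof. induction 1; auto. Qed.

Lemma app_spine_occurs P x T t A k :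
  app_spine P x T t A -> occurs k A -> occurs k T.
Proof. induction 1; intros Hk; auto; apply IHapp_spine; simpl; auto. Qed.

Lemma app_spine_const P x c t A : app_spine P x (TConst c) t A -> A = TConst c.
Proof. induction 1; [reflexivity | discriminate]. Qed.

Lemma app_spine_forall_neg P x T t A :
  app_spine P x T t A -> forall_neg T -> proper T -> forall_neg A /\ proper A.
Proof.
  induction 1; intros HT HpT; auto.
  destruct (IHapp_spine HT HpT) as [Hneg [_ Hp]]; inversion Hneg; auto.
Qed.

Lemma typing_app_spine e G t A x :
  typing e G t A -> head_var t = Some x ->
  exists T, lookup G x = Some T /\ (spine_no_all T -> app_spine (typing e G) x T t A).
Proof.
  induction 1; intros Hx; simpl in Hx.
  - injection Hx as ->; exists A; split; auto; constructor.
  - discriminate.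
  - destruct (IHtyping1 Hx) as [T [HT HN]]; exists T; split; auto.
    intros Hs; econstructor; eauto.
  - (* the result type would bind a variable that does not occur in the
       shifted type of the head *)
    destruct (IHtyping Hx) as [T' [HT' HN]]; rewrite lookup_shift_ctx in HT'.
    destruct (lookup G x) as [T|]; simpl in HT'; [|discriminate].
    injection HT' as <-; exists T; split; auto; intros Hs; exfalso.
    rewrite tlift_shift in HN.
    apply (not_occurs_tren T S 0); [intros m; discriminate|].
    exact (app_spine_occurs _ _ _ _ _ 0 (HN (spine_no_all_tren _ _ Hs)) H).
  - destruct (IHtyping Hx) as [T [HT HN]]; exists T; split; auto.
    intros Hs; exfalso; exact (app_spine_spine_no_all _ _ _ _ _ (HN Hs) Hs).
Qed.

Lemma app_spine_strengthen (P R : term -> ty -> Prop) x T t A :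
  app_spine P x T t A -> forall_neg T -> proper T -> normal t ->
  (forall v B, P v B -> forall_pos B -> proper B -> normal v ->
     term_size v < term_size t -> R v B) ->
  app_spine R x T t A.
Proof.
  induction 1 as [|u v B C Hu IHu HPv]; intros HT HpT Hn HR; [constructor|].
  destruct (normal_app _ _ Hn) as [Hnu Hnv].
  destruct (app_spine_forall_neg _ _ _ _ _ Hu HT HpT) as [Hneg [HpB _]].
  inversion Hneg; subst.
  econstructor.
  - apply IHu; auto; intros; apply HR; simpl; auto; lia.
  - apply HR; simpl; auto; lia.
Qed.

Lemma app_spine_typing e G x T t A :
  app_spine (typing e G) x T t A -> lookup G x = Some T -> typing e G t A.
Proof. induction 1; intros; [constructor; auto | econstructor; eauto]. Qed.

Lemma app_spine_not_free P x T t A a :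
  app_spine P x T t A -> x <> a -> (forall v B, P v B -> ~ free_in a v) -> ~ free_in a t.
Proof.
  induction 1 as [|u v B C Hu IHu HPv]; intros Hx HP; simpl.
  - intros E; now apply Hx.
  - intros [Hfu|Hfv]; [exact (IHu Hx HP Hfu) | exact (HP _ _ HPv Hfv)].
Qed.

(** * Normal terms of forall^+ types *)

Definition negative_ctx (G : context) : Prop :=
  forall y T, lookup G y = Some T ->
  (exists c, T = TConst c) \/ (forall_neg T /\ proper T).

Lemma negative_ctx_shift G : negative_ctx G -> negative_ctx (shift_ctx G).
Proof.
  intros H y T HT; rewrite lookup_shift_ctx in HT.
  destruct (lookup G y) eqn:E; simpl in HT; [|discriminate].
  injection HT as <-; rewrite tlift_shift.
  destruct (H _ _ E) as [[c ->]|[Hn Hp]].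
  - left; now exists c.
  - right; split; [apply forall_pos_neg_tren | apply proper_tren]; auto.
Qed.

Lemma negative_ctx_cons G x B :
  negative_ctx G -> forall_neg B -> proper B -> negative_ctx ((x, B) :: G).
Proof.
  intros H HB HpB y T; simpl; destruct (y =? x); [|apply H].
  intros E; injection E as <-; auto.
Qed.

Section ForallPosNormalInduction.

Variable Q : context -> term -> ty -> Prop.

Hypothesis Q_all : forall G t A, occurs 0 A -> Q (shift_ctx G) t A -> Q G t (TAll A).
Hypothesis Q_lam :
  forall G x u B C, proper B -> Q ((x, B) :: G) u C -> Q G (Lam x u) (TArr B C).
Hypothesis Q_neutral : forall G x T t A,
  lookup G x = Some T -> forall_neg T -> app_spine (Q G) x T t A -> Q G t A.

Let Q_below (n : nat) : Prop := forall t A G, term_size t < n ->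
  negative_ctx G -> normal t -> typF G t A -> forall_pos A -> proper A -> Q G t A.

Lemma forall_pos_neutral n x t A G :
  Q_below n -> term_size t <= n -> head_var t = Some x ->
  negative_ctx G -> normal t -> typF G t A -> forall_pos A -> Q G t A.
Proof.
  intros IH Hsize Hx HG Hn Ht Hpos.
  destruct (typing_app_spine _ _ _ _ _ Ht Hx) as [T [HT Hspine]].
  destruct (HG _ _ HT) as [[c ->]|[HnT HpT]].
  - rewrite (app_spine_const _ _ _ _ _ (Hspine I)) in Hpos; inversion Hpos.
  - apply (Q_neutral _ _ _ _ _ HT HnT).
    apply (app_spine_strengthen _ _ _ _ _ _ (Hspine (forall_neg_spine_no_all _ HnT)));
      auto.
    intros v B Hv HposB HpB Hnv Hlt; apply IH; auto; lia.
Qed.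

Lemma forall_pos_normal_ind_below n : Q_below n.
Proof.
  induction n as [|n IHn]; intros t A G Hsize; [lia|].
  intros HG Hn Ht Hpos Hpr.
  destruct (normal_lam_or_neutral _ Hn) as [[x [u ->]]|[x Hx]];
    [|apply (forall_pos_neutral n x); auto; lia].
  revert G HG Ht; induction A as [m|c|B _ C _|A IHA]; intros G HG Ht.
  - destruct (typing_lam_arrow_under_alls _ _ _ _ _ Ht).
  - inversion Hpos.
  - inversion Hpos; subst; destruct Hpr.
    apply Q_lam; auto.
    apply IHn; simpl in *; auto using negative_ctx_cons; [lia | now apply typing_lam_inv].
  - inversion Hpos; subst; destruct Hpr.
    apply Q_all; auto using negative_ctx_shift, typing_all_inv.
Qed.

Lemma forall_pos_normal_ind G t A :
  negative_ctx G -> normal t -> typF G t A -> forall_pos A -> proper A -> Q G t A.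
Proof. apply (forall_pos_normal_ind_below (S (term_size t))); lia. Qed.

End ForallPosNormalInduction.

Lemma forall_pos_typF0 G t A :
  negative_ctx G -> normal t -> typF G t A -> forall_pos A -> proper A -> typF0 G t A.
Proof.
  apply forall_pos_normal_ind; intros.
  - now constructor.
  - now constructor.
  - eapply app_spine_typing; eauto.
Qed.

Lemma forall_pos_const_not_free G t A a c :
  negative_ctx G -> lookup G a = Some (TConst c) ->
  normal t -> typF G t A -> forall_pos A -> proper A -> ~ free_in a t.
Proof.
  intros HG Ha Hn Ht Hpos Hpr.
  revert Ha; revert G t A HG Hn Ht Hpos Hpr.
  apply (forall_pos_normal_ind (fun G t _ => lookup G a = Some (TConst c) -> ~ free_in a t)).
  - intros G t A _ IH Ha; apply IH; now rewrite lookup_shift_ctx, Ha.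
  - intros G x u B C _ IH Ha [Hax Hu]; apply IH; auto; simpl.
    now destruct (Nat.eqb_spec a x).
  - intros G x T t A HT HnT Hspine Ha.
    apply (app_spine_not_free _ _ _ _ _ _ Hspine).
    + intros ->; rewrite Ha in HT; injection HT as <-; inversion HnT.
    + intros v B Hv; exact (Hv Ha).
Qed.

Theorem theorem2p2p4 (D : ty) :
  closed_ty D -> proper D -> forall_pos D -> ~ contains_O D ->
  syntactical_data_type D.
Proof.
  intros Hc Hp Hpos HO.
  split; repeat split; auto.
  - intros t Hn Ht.
    apply forall_pos_typF0; auto.
    intros y T H; discriminate H.
  - intros t a Hn Ht.
    apply (forall_pos_const_not_free [(a, O_const)] t D a 0); auto.
    + intros y T; simpl; destruct (y =? a); intros H; [|discriminate].
      injection H as <-; left; now exists 0.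
    + simpl; now rewrite Nat.eqb_refl.
Qed.
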